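(* Let $M\in\mathbb R^{\mathbb N\times\mathbb N}$, let $\mathbb N=\bigcup_{\ell\in\mathbb N}B_\ell$ be a partition, $0<q<1$, $C>0$, $\varepsilon>0$ and $r\in\mathbb N$, such that: $|M_{ij}|\le Cq^{(1/2+\varepsilon)|\ell-k|}$ for all $i\in B_\ell$, $j\in B_k$; for all $i\in B_\ell$, $\#\{j\in B_k:M_{ij}\ne0\}\le Cq^{\min\{k,\ell\}-k}$; for all $j\in B_k$, $\#\{i\in B_\ell:M_{ij}\ne0\}\le Cq^{\min\{k,\ell\}-\ell}$; and $M_{ij}=0$ whenever $i\in B_\ell$, $j\in B_k$ with $|\ell-k|\le r$. Then \[\|M\|_2\le C_{\rm geo}q^{\varepsilon r},\] where $C_{\rm geo}>0$ depends only on $C$ and $q$.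
   Context: $\|\cdot\|_2$ is the operator norm on $\ell_2$. *)

From HB Require Import structures.
From mathcomp Require Import all_boot all_order all_algebra.
From mathcomp Require Import all_classical all_reals exp.
Set Implicit Arguments. Unset Strict Implicit. Unset Printing Implicit Defensive.
Import Order.TTheory GRing.Theory Num.Theory.
Local Open Scope ring_scope.

(* ||M||_2 <= K for the l2 operator norm: every finite section of M, acting on
   every finitely supported vector, has Euclidean operator norm at most K
   (the l2 operator norm of an infinite matrix is the sup of the operator
   norms of its finite sections; finitely supported vectors are dense). *)
Definition op_norm2_le (R : realType) (M : nat -> nat -> R) (K : R) : Prop :=
  forall (m n : nat) (x : nat -> R),
    \sum_(i < m) (\sum_(j < n) M i j * x j) ^+ 2
      <= K ^+ 2 * \sum_(j < n) x j ^+ 2.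

(* The partition N = U_l B_l is encoded by blk : nat -> nat, with
   B_l = [set i | blk i = l].  [nnz_row M blk k i] <= b  means
   #{ j in B_k : M i j <> 0 } <= b (the count being possibly infinite: we
   bound every finite initial portion). *)
Definition row_count_le (R : realType) (M : nat -> nat -> R) (blk : nat -> nat)
    (k i : nat) (b : R) : Prop :=
  forall n : nat, (#|[set j : 'I_n | (blk j == k) && (M i j != 0)]|%:R : R) <= b.

Definition col_count_le (R : realType) (M : nat -> nat -> R) (blk : nat -> nat)
    (l j : nat) (b : R) : Prop :=
  forall n : nat, (#|[set i : 'I_n | (blk i == l) && (M i j != 0)]|%:R : R) <= b.

From HB Require Import structures.
From mathcomp Require Import all_boot all_order all_algebra.
From mathcomp Require Import all_classical all_reals exp.
From mathcomp Require Import ring.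
Import Order.TTheory GRing.Theory Num.Theory.
Local Open Scope ring_scope.

(* Apply the Schur test with the weight q^(l/2) on every index of the block
   B_l.  For a row in B_l, the entries lying in B_k contribute at most
     (number of nonzeros) * C q^((1/2+eps)|l-k|) * q^(k/2)
       <= C^2 q^(eps |l-k|) q^(l/2),
   because the count bound C q^(min(k,l)-k) exactly compensates the change of
   weight.  As only blocks with |l-k| > r contribute, summing this two-sided
   geometric tail bounds the weighted row sums by K q^(l/2) with
   K = 2 C^2 q^(eps (r+1)) / (1 - q^eps); the columns are symmetric, and the
   Schur test gives ||M||_2 <= K. *)

Lemma weighted_cauchy_schwarz {R : realDomainType} {I : finType}
    (c y : I -> R) :
  (forall i, 0 <= c i) ->
  (\sum_i c i * y i) ^+ 2 <= (\sum_i c i) * \sum_i c i * y i ^+ 2.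
Proof.
move=> c_ge0.
have double_sum (a b : I -> R) :
    (\sum_i a i) * (\sum_j b j) = \sum_i \sum_j a i * b j.
  by rewrite mulr_suml; apply: eq_bigr => i _; rewrite mulr_sumr.
have lagrange : \sum_i \sum_j c i * c j * (y i - y j) ^+ 2
    = ((\sum_i c i) * (\sum_i c i * y i ^+ 2) - (\sum_i c i * y i) ^+ 2) *+ 2.
  rewrite mulrnBl mulr2n {2}mulrC expr2 !double_sum exchange_big -big_split.
  rewrite -sumrMnl -sumrB; apply: eq_bigr => i _.
  rewrite -big_split -sumrMnl -sumrB; apply: eq_bigr => j _ /=.
  by rewrite mulr2n; ring.
have : 0 <= \sum_i \sum_j c i * c j * (y i - y j) ^+ 2.
  apply: sumr_ge0 => i _; apply: sumr_ge0 => j _.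
  by apply: mulr_ge0; [exact: mulr_ge0 | exact: sqr_ge0].
by rewrite lagrange pmulrn_lge0 // subr_ge0.
Qed.

Lemma schur_test {R : realFieldType} {I J : finType} (M : I -> J -> R)
    (w : I -> R) (v : J -> R) (K1 K2 : R) (x : J -> R) :
  (forall i, 0 <= w i) -> (forall j, 0 < v j) -> 0 <= K1 ->
  (forall i, \sum_j `|M i j| * v j <= K1 * w i) ->
  (forall j, \sum_i `|M i j| * w i <= K2 * v j) ->
  \sum_i (\sum_j M i j * x j) ^+ 2 <= K1 * K2 * \sum_j x j ^+ 2.
Proof.
move=> w_ge0 v_gt0 K1_ge0 row_le col_le.
have v_neq0 j : v j != 0 by rewrite gt_eqF.
have row_cs i : (\sum_j M i j * x j) ^+ 2
    <= K1 * w i * \sum_j `|M i j| * x j ^+ 2 / v j.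
  have norm_le :
      `|\sum_j M i j * x j| <= \sum_j (`|M i j| * v j) * (`|x j| / v j).
    apply: le_trans (ler_norm_sum _ _ _) _; apply: ler_sum => j _.
    by rewrite normrM -mulrA [v j * _]mulrC divfK.
  have := weighted_cauchy_schwarz (fun j => `|M i j| * v j)
    (fun j => `|x j| / v j)
    (fun j => mulr_ge0 (normr_ge0 (M i j)) (ltW (v_gt0 j))).
  have -> : \sum_j `|M i j| * v j * (`|x j| / v j) ^+ 2
      = \sum_j `|M i j| * x j ^+ 2 / v j.
    apply: eq_bigr => j _; rewrite -[x j ^+ 2]real_normK ?num_real //.
    by field; exact: v_neq0.
  move=> cs; apply: le_trans (le_trans _ cs) _.
    rewrite -real_normK ?num_real // lerXn2r ?nnegrE //.
    exact: le_trans (normr_ge0 _) norm_le.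
  apply: ler_wpM2r (row_le i).
  apply: sumr_ge0 => j _.
  by rewrite divr_ge0 ?(ltW (v_gt0 j)) // mulr_ge0 ?sqr_ge0.
apply: le_trans (ler_sum _ (fun i _ => row_cs i)) _.
under eq_bigr do rewrite -mulrA; rewrite -mulr_sumr -mulrA.
apply: ler_wpM2l => //.
under eq_bigr do rewrite mulr_sumr; rewrite exchange_big mulr_sumr.
apply: ler_sum => j _.
have -> : \sum_i w i * (`|M i j| * x j ^+ 2 / v j)
    = x j ^+ 2 / v j * \sum_i `|M i j| * w i.
  by rewrite mulr_sumr; apply: eq_bigr => i _; ring.
apply: le_trans (ler_wpM2l _ (col_le j)) _.
  by rewrite divr_ge0 ?sqr_ge0 ?(ltW (v_gt0 j)).
by rewrite mulrCA divfK.
Qed.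

Lemma geometric_tail_sum {R : comPzRingType} (p : R) (r n : nat) :
  (1 - p) * \sum_(d < n) (if (r < d)%N then p ^+ d else 0)
    = p ^+ r.+1 - p ^+ maxn n r.+1.
Proof.
elim: n => [|n IHn]; first by rewrite big_ord0 mulr0 max0n subrr.
rewrite big_ord_recr /= mulrDr IHn.
case: ltnP => [r_lt_n|n_le_r].
  rewrite (maxn_idPl r_lt_n) (maxn_idPl (ltnW r_lt_n : r.+1 <= n.+1)%N).
  by rewrite [p ^+ n.+1]exprS; ring.
rewrite mulr0 addr0 (maxn_idPr (leqW n_le_r)).
by rewrite (maxn_idPr (n_le_r : n.+1 <= r.+1)%N).
Qed.

Lemma geometric_tail_le {R : realFieldType} (p : R) (r n : nat) :
  0 <= p -> p < 1 ->
  \sum_(d < n) (if (r < d)%N then p ^+ d else 0) <= p ^+ r.+1 / (1 - p).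
Proof.
move=> p_ge0 p_lt1; rewrite ler_pdivlMr ?subr_gt0 // mulrC geometric_tail_sum.
by rewrite lerBlDr lerDl exprn_ge0.
Qed.

Lemma sum_distn_le {R : numDomainType} (g : nat -> R) (T : R) (a N : nat) :
  (forall d, 0 <= g d) -> (forall n, \sum_(d < n) g d <= T) ->
  \sum_(k < N) g `|a - k|%N <= T *+ 2.
Proof.
move=> g_ge0 partial_le.
have widen : \sum_(k < N) g `|a - k|%N <= \sum_(0 <= k < a + N) g `|a - k|%N.
  rewrite -(big_mkord xpredT (fun k => g `|a - k|%N)).
  by rewrite (big_cat_nat (leq0n N) (leq_addl a N)) /= lerDl sumr_ge0.
apply: le_trans widen _.
rewrite (big_cat_nat (leq0n a) (leq_addr N a)) mulr2n /=.
apply: lerD.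
  rewrite big_nat_rev /= add0n.
  under eq_big_nat => i /andP[_ i_lt_a].
    by rewrite distnEl ?leq_subr // subKn //; over.
  apply: le_trans (partial_le a.+1); rewrite big_mkord big_ord_recl /=.
  by rewrite lerDr g_ge0.
rewrite -{1}[a]add0n big_addn addKn.
under eq_big_nat => i _ do rewrite distnEr ?leq_addl // addnK.
by rewrite big_mkord.
Qed.

Lemma sum_by_level {V : nmodType} {I : finType} {lvl : I -> nat} {N : nat}
    (F : I -> V) :
  (forall i, (lvl i < N)%N) ->
  \sum_i F i = \sum_(k < N) \sum_(i | lvl i == k) F i.
Proof.
move=> lvl_lt; under [RHS]eq_bigr do rewrite big_mkcond.
rewrite exchange_big; apply: eq_bigr => i _; rewrite -big_mkcond /=.
rewrite (eq_bigl (fun k : 'I_N => k == lvl i :> nat)) => [|k]; last first.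
  exact: eq_sym.
by rewrite (big_ord1_eq _ (fun=> F i)) lvl_lt.
Qed.

Lemma sum_norm_le_card_support {R : numDomainType} {I : finType} (P : pred I)
    (F : I -> R) (b : R) :
  (forall i, P i -> `|F i| <= b) ->
  \sum_(i | P i) `|F i| <= #|[set i | P i && (F i != 0)]|%:R * b.
Proof.
move=> F_le; rewrite (bigID (fun i => F i != 0)) /=.
rewrite [X in _ + X]big1 => [|i /andP[_ /negPn/eqP ->]]; last exact: normr0.
rewrite addr0 mulr_natl -sumr_const.
rewrite [X in _ <= X](eq_bigl (fun i => P i && (F i != 0))) => [|i]; last first.
  by rewrite inE.
by apply: ler_sum => i /andP[Pi _]; exact: F_le.
Qed.

Lemma powR_lt1 {R : realType} (a x : R) :
  0 <= a -> a < 1 -> 0 < x -> a `^ x < 1.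
Proof.
move=> a_ge0 a_lt1 x_gt0.
by have := gt0_ltr_powR x_gt0 _ _ a_lt1; rewrite powR1; apply; rewrite nnegrE.
Qed.

Section DecayingMatrices.
Context {R : realType} {C q eps : R}.
Hypotheses (C_ge0 : 0 <= C) (q_gt0 : 0 < q) (q_lt1 : q < 1) (eps_gt0 : 0 < eps).

Local Notation p := (q `^ eps).

Lemma powR_decay_count_balance (a b : nat) :
  q `^ ((2^-1 + eps) * (`|a - b|%N)%:R) * q ^- (b - minn b a)%N
    * q `^ (b%:R / 2)
    = p ^+ `|a - b|%N * q `^ (a%:R / 2).
Proof.
have powRqD x y : q `^ (x + y) = q `^ x * q `^ y.
  by rewrite powRD // (gt_eqF q_gt0) implybT.
rewrite -powR_invn ?ltW // -(powR_mulrn _ (powR_ge0 q eps)) -powRrM -!powRqD.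
congr (q `^ _).
have [a_le_b|b_lt_a] := leqP a b.
  by rewrite (distnEr a_le_b) natrB //; field.
by rewrite (distnEl (ltnW b_lt_a)) subnn natrB ?(ltnW b_lt_a) //; field.
Qed.

Lemma block_weighted_sum_le (M : nat -> nat -> R) (blk : nat -> nat)
    (i k n : nat) :
  (forall j, `|M i j| <= C * q `^ ((2^-1 + eps) * (`|blk i - blk j|%N)%:R)) ->
  row_count_le M blk k i (C * q ^- (k - minn k (blk i))%N) ->
  \sum_(j < n | blk j == k) `|M i j| * q `^ ((blk j)%:R / 2)
    <= C ^+ 2 * q `^ ((blk i)%:R / 2) * p ^+ `|blk i - k|%N.
Proof.
move=> M_le count_le.
under eq_bigr => j /eqP blk_j do rewrite blk_j.
rewrite -mulr_suml.
pose b := C * q `^ ((2^-1 + eps) * (`|blk i - k|%N)%:R).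
have b_ge0 : 0 <= b by rewrite mulr_ge0 ?powR_ge0.
have entries_le := sum_norm_le_card_support (fun j : 'I_n => blk j == k)
  (fun j => M i j) b.
apply: le_trans (ler_wpM2r (powR_ge0 _ _) (entries_le _)) _.
  by move=> j /eqP blk_j; rewrite /b -blk_j; exact: M_le.
apply: le_trans (ler_wpM2r (powR_ge0 _ _) (ler_wpM2r b_ge0 (count_le n))) _.
rewrite [X in _ <= X]mulrAC -[X in _ <= X]mulrA -powR_decay_count_balance /b.
by rewrite le_eqVlt; apply/orP; left; apply/eqP; ring.
Qed.

Lemma decaying_row_weighted_sum_le (M : nat -> nat -> R) (blk : nat -> nat)
    (i r n : nat) :
  (forall j, `|M i j| <= C * q `^ ((2^-1 + eps) * (`|blk i - blk j|%N)%:R)) ->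
  (forall k, row_count_le M blk k i (C * q ^- (k - minn k (blk i))%N)) ->
  (forall j, (`|blk i - blk j| <= r)%N -> M i j = 0) ->
  \sum_(j < n) `|M i j| * q `^ ((blk j)%:R / 2)
    <= (C ^+ 2 * (p ^+ r.+1 / (1 - p))) *+ 2 * q `^ ((blk i)%:R / 2).
Proof.
move=> M_le count_le M_band.
pose g d := if (r < d)%N then p ^+ d else 0.
have lvl_lt (j : 'I_n) : (blk j < (\max_(j < n) blk j).+1)%N.
  by rewrite ltnS (leq_bigmax (F := fun j : 'I_n => blk j)).
rewrite (sum_by_level _ lvl_lt).
apply: (@le_trans _ _
  (\sum_(k < _) C ^+ 2 * q `^ ((blk i)%:R / 2) * g `|blk i - k|%N)).
  apply: ler_sum => k _; rewrite /g.
  case: ifP => [_|r_ge]; first exact: block_weighted_sum_le.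
  rewrite mulr0 big1 // => j /eqP blk_j.
  by rewrite M_band ?normr0 ?mul0r // blk_j leqNgt r_ge.
rewrite -mulr_sumr.
have -> : (C ^+ 2 * (p ^+ r.+1 / (1 - p))) *+ 2 * q `^ ((blk i)%:R / 2)
    = C ^+ 2 * q `^ ((blk i)%:R / 2) * ((p ^+ r.+1 / (1 - p)) *+ 2).
  by rewrite !mulr2n; ring.
apply: ler_wpM2l; first by rewrite mulr_ge0 ?sqr_ge0 ?powR_ge0.
have p_ge0 : 0 <= p := powR_ge0 q eps.
have p_lt1 : p < 1 := powR_lt1 _ _ (ltW q_gt0) q_lt1 eps_gt0.
apply: sum_distn_le => [d|m]; last exact: geometric_tail_le.
by rewrite /g; case: ifP => // _; exact: exprn_ge0.
Qed.

End DecayingMatrices.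

Theorem lemma8p3 (R : realType) (C q eps : R) :
  0 < q -> q < 1 -> 0 < C -> 0 < eps ->
  exists Cgeo : R, 0 < Cgeo /\
  forall (M : nat -> nat -> R) (blk : nat -> nat) (r : nat),
    (forall i j, `|M i j| <= C * q `^ ((2^-1 + eps) * (`|blk i - blk j|%N)%:R)) ->
    (forall i k, row_count_le M blk k i
                   (C * q ^- (k - minn k (blk i))%N)) ->
    (forall j l, col_count_le M blk l j
                   (C * q ^- (l - minn (blk j) l)%N)) ->
    (forall i j, (`|blk i - blk j| <= r)%N -> M i j = 0) ->
    op_norm2_le M (Cgeo * q `^ (eps * r%:R)).
Proof.
move=> q_gt0 q_lt1 C_gt0 eps_gt0; set p := q `^ eps.
have p_gt0 : 0 < p by exact: powR_gt0.
have p_lt1 : p < 1 by exact: powR_lt1 _ _ (ltW q_gt0) q_lt1 eps_gt0.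
exists ((C ^+ 2 * (p / (1 - p))) *+ 2).
split; first by rewrite pmulrn_lgt0 // mulr_gt0 ?exprn_gt0 ?divr_gt0 ?subr_gt0.
move=> M blk r M_le row_le col_le M_band m n x.
set K := (C ^+ 2 * (p ^+ r.+1 / (1 - p))) *+ 2.
have -> : (C ^+ 2 * (p / (1 - p))) *+ 2 * q `^ (eps * r%:R) = K.
  rewrite powRrM powR_mulrn ?powR_ge0 // -/p /K [p ^+ r.+1]exprS.
  by rewrite !mulr2n; ring.
have C_ge0 := ltW C_gt0.
rewrite expr2; apply: (schur_test (fun (i : 'I_m) (j : 'I_n) => M i j)
  (fun i => q `^ ((blk i)%:R / 2)) (fun j => q `^ ((blk j)%:R / 2))).
- by move=> i; exact: powR_ge0.
- by move=> j; exact: powR_gt0.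
- rewrite /K mulrn_wge0 // mulr_ge0 ?sqr_ge0 //.
  by rewrite divr_ge0 ?exprn_ge0 ?ltW ?subr_gt0.
- move=> i; exact: (decaying_row_weighted_sum_le C_ge0 q_gt0 q_lt1 eps_gt0
    M blk i r n (M_le i) (row_le i) (M_band i)).
- move=> j; apply: (decaying_row_weighted_sum_le C_ge0 q_gt0 q_lt1 eps_gt0
    (fun j i => M i j) blk j r m).
  + by move=> i; rewrite distnC.
  + by move=> l; rewrite minnC; exact: col_le.
  + by move=> i; rewrite distnC; exact: M_band.
Qed.
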